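(* Every xor-set $\mathcal{X}\subseteq\mathbb{Z}_2^\omega$ is a maximal (with respect to inclusion) thin set. In particular, $\mathcal{X}$ is not Borel.
   Context: $\mathbb{Z}_2^\omega$ is the Cantor cube of infinite binary sequences indexed by $\omega=\{0,1,2,\dots\}$, with the product topology. A set $T\subseteq\mathbb{Z}_2^\omega$ is thin if for every $n\in\omega$ the map $x\mapsto x|_{\omega\setminus\{n\}}$ is injective on $T$. For $x\in\mathbb{Z}_2^\omega$ and $n\in\omega$, $x^{\#n}$ is the sequence obtained from $x$ by flipping the $n$-th coordinate. A set $\mathcal{X}\subseteq\mathbb{Z}_2^\omega$ is a xor-set if for every $n\in\omega$ and $x\in\mathbb{Z}_2^\omega$: $x\in\mathcal{X}\iff x^{\#n}\notin\mathcal{X}$. *)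

From mathcomp Require Import all_boot all_order all_algebra.
From mathcomp Require Import all_classical all_reals all_analysis.
Set Implicit Arguments.
Unset Strict Implicit.
Unset Printing Implicit Defensive.
Local Open Scope classical_set_scope.

(* The Cantor cube Z_2^omega = bool^nat with the product topology
   (mathcomp-analysis' [cantor_space]). *)

Definition flip (x : cantor_space) (n : nat) : cantor_space :=
  fun m => if m == n then ~~ x m else x m.

Definition thin (T : set cantor_space) : Prop :=
  forall n : nat, forall x y : cantor_space, T x -> T y ->
    (forall m : nat, m <> n -> x m = y m) -> x = y.

Definition xor_set (X : set cantor_space) : Prop :=
  forall (n : nat) (x : cantor_space), X x <-> ~ X (flip x n).

Definition maximal_thin (X : set cantor_space) : Prop :=
  thin X /\ forall Y : set cantor_space, thin Y -> X `<=` Y -> Y = X.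

Definition borel_cantor (A : set cantor_space) : Prop :=
  <<s [set: cantor_space], open >> A.

From mathcomp Require Import all_boot all_order all_algebra.
From mathcomp Require Import all_classical all_reals all_analysis.

(* A xor-set is thin, since two of its points differing only at n would be
   x and x^{#n}; it is maximal, since any y outside it has y^{#0} inside.
   It cannot have the Baire property (which every Borel set has): flipping
   the k-th coordinate maps the part of X in a cylinder of length k onto the
   part outside X, so by the Baire category theorem both parts are
   non-meager in every cylinder, whereas a set with the Baire property is,
   on some cylinder, either meager or comeager. *)

Local Open Scope classical_set_scope.

Definition cyl (x : cantor_space) (k : nat) : set cantor_space :=
  [set y | forall i, (i < k)%N -> y i = x i].

Lemma cyl_refl x k : cyl x k x.
Proof. by []. Qed.

Lemma cyl_sub {x y k} : cyl x k y -> cyl y k `<=` cyl x k.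
Proof. by move=> xy z yz i ik; rewrite yz // xy. Qed.

Lemma cyl_le x j k : (k <= j)%N -> cyl x j `<=` cyl x k.
Proof. by move=> kj z xz i ik; apply: xz; apply: leq_trans kj. Qed.

Lemma nbhs_cyl x k : nbhs x (cyl x k).
Proof.
elim: k => [|k IH]; first by apply: filterS filterT => y _ i.
have xk : nbhs x ((fun f : cantor_space => f k) @^-1` [set x k]).
  apply: (@proj_continuous nat (fun _ => bool) k x).
  by rewrite nbhs_principalE; apply/principal_filterP.
apply: filterS (filterI IH xk) => y [yx yk] i; rewrite ltnS leq_eqVlt.
by case/orP => [/eqP->|/yx].
Qed.

Lemma cyl_filter x : Filter (filter_from [set: nat] (cyl x)).
Proof.
apply: filter_from_filter; first by exists 0%N.
move=> a b _ _; exists (maxn a b) => // y xy.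
by split; apply: cyl_le xy; rewrite ?leq_maxl ?leq_maxr.
Qed.

Lemma cyl_cvg x : filter_from [set: nat] (cyl x) --> x.
Proof.
have cyl_x_filter := cyl_filter x; apply/cvg_sup => i A /= [_ [[B _ <-] Bxi BA]].
by exists i.+1 => // y xy; apply: BA; rewrite /= (xy i (ltnSn i)).
Qed.

Lemma open_cylP (U : set cantor_space) :
  open U <-> forall x, U x -> exists k, cyl x k `<=` U.
Proof.
split=> [oU x Ux|Ucyl].
  by have [k _ xkU] := @cyl_cvg x U (open_nbhs_nbhs (conj oU Ux)); exists k.
rewrite openE => x /Ucyl [k xkU]; exact: filterS xkU (nbhs_cyl x k).
Qed.

Lemma flipK n : involutive (flip^~ n).
Proof. by move=> y; apply: funext => i; rewrite /flip; case: eqP => // _; rewrite negbK. Qed.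

Lemma flip_eq_off x n m : m <> n -> flip x n m = x m.
Proof. by rewrite /flip; case: eqP. Qed.

Lemma eq_off_flip x y n :
  (forall m, m <> n -> x m = y m) -> y = x \/ y = flip x n.
Proof.
move=> xy; case: (eqVneq (x n) (y n)) => xyn; [left|right]; apply: funext => m.
  by have [->|/eqP /xy] := eqVneq m n; [rewrite xyn|].
rewrite /flip; case: eqP => [->|/xy //].
by move: xyn; case: (x n); case: (y n).
Qed.

Lemma cyl_flip n {x y k} : cyl x k y -> cyl (flip x n) k (flip y n).
Proof. by move=> xy i ik; rewrite /flip xy. Qed.

Lemma cyl_flip_last {x y k} : cyl x k y -> cyl x k (flip y k).
Proof. by move=> xy i ik; rewrite flip_eq_off ?xy // => ik'; rewrite ik' ltnn in ik. Qed.

(* Cylinders form a base of the topology, so this is the usual notion. *)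
Definition nowhere_dense (F : set cantor_space) : Prop :=
  forall x k, exists y j, cyl y j `<=` cyl x k /\ cyl y j `&` F = set0.

Definition meager (M : set cantor_space) : Prop :=
  exists F : nat -> set cantor_space,
    (forall n, nowhere_dense (F n)) /\ M `<=` \bigcup_n F n.

Lemma nowhere_dense_refine {F} x k : nowhere_dense F ->
  exists y j, [/\ (k < j)%N, cyl y j `<=` cyl x k & cyl y j `&` F = set0].
Proof.
move=> /(_ x k) [y [j [yx yF]]]; exists y, (maxn j k.+1).
have yjy : cyl y (maxn j k.+1) `<=` cyl y j by apply: cyl_le; rewrite leq_maxl.
split; first by rewrite leq_max ltnSn orbT.
- exact: subset_trans yjy yx.
- exact: subsetI_eq0 yjy (@subset_refl _ _) yF.
Qed.

Lemma nowhere_dense0 : nowhere_dense set0.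
Proof. by move=> x k; exists x, k; split; rewrite ?setI0. Qed.

Lemma sub_meager A B : A `<=` B -> meager B -> meager A.
Proof. by move=> AB [F [Fnd BF]]; exists F; split => //; apply: subset_trans BF. Qed.

Lemma nowhere_dense_meager F : nowhere_dense F -> meager F.
Proof. by move=> Fnd; exists (fun=> F); split => // x Fx; exists 0%N. Qed.

Lemma meager0 : meager set0.
Proof. exact/nowhere_dense_meager/nowhere_dense0. Qed.

Lemma meager_bigcup (M : nat -> set cantor_space) :
  (forall m, meager (M m)) -> meager (\bigcup_m M m).
Proof.
move=> /choice [F MF].
exists (fun n => if (unpickle n : option (nat * nat)) is Some (m, k)
                 then F m k else set0); split.
  by move=> n; case: (unpickle n) => [[m k]|]; [exact: (MF m).1 | exact: nowhere_dense0].
move=> x [m _ Mx]; have [k _ Fx] := (MF m).2 x Mx.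
by exists (pickle (m, k)) => //; rewrite pickleK.
Qed.

Lemma meagerU A B : meager A -> meager B -> meager (A `|` B).
Proof.
move=> mA mB; apply: (@sub_meager _ (\bigcup_n (if n is 0%N then A else B))).
  by move=> x [Ax|Bx]; [exists 0%N|exists 1%N].
by apply: meager_bigcup; case.
Qed.

Lemma meager_flip M n : meager M -> meager (flip^~ n @^-1` M).
Proof.
case=> F [Fnd MF]; exists (fun m => flip^~ n @^-1` F m); split; last first.
  by move=> z /MF [m _ Fz]; exists m.
move=> m x k; have [y [j [yx yF]]] := Fnd m (flip x n) k.
exists (flip y n), j; split.
  move=> z /(cyl_flip n); rewrite flipK => /yx /(cyl_flip n).
  by rewrite !flipK.
apply/disjoints_subset => z /(cyl_flip n); rewrite flipK => yz.
by move: yF => /disjoints_subset; apply.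
Qed.

Lemma cyl_nested_cap (x : nat -> cantor_space) (k : nat -> nat) :
  (forall n, cyl (x n.+1) (k n.+1) `<=` cyl (x n) (k n)) ->
  (forall n, (n <= k n)%N) -> exists z, forall n, cyl (x n) (k n) z.
Proof.
move=> xS kn.
have nest n m : (n <= m)%N -> cyl (x m) (k m) `<=` cyl (x n) (k n).
  move=> /subnK <-; elim: (m - n)%N => [//|d IH].
  by rewrite addSn; apply: subset_trans (xS _) IH.
exists (fun i => x i.+1 i) => n i ik; case: (leqP i.+1 n) => [iSn|ni].
  by rewrite (nest _ _ iSn _ (cyl_refl _ _) i (kn i.+1)).
exact: (nest n i.+1 (ltnW ni) _ (cyl_refl _ _)).
Qed.

Lemma cyl_not_meager x0 k0 : ~ meager (cyl x0 k0).
Proof.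
case=> F [Fnd x0F].
have /choice [next nextP] (p : nat * (cantor_space * nat)) :
    exists q : cantor_space * nat, [/\ (p.2.2 < q.2)%N,
      cyl q.1 q.2 `<=` cyl p.2.1 p.2.2 & cyl q.1 q.2 `&` F p.1 = set0].
  by have [y [j ?]] := nowhere_dense_refine p.2.1 p.2.2 (Fnd p.1); exists (y, j).
pose c := fix c n := if n is n'.+1 then next (n', c n') else (x0, k0).
have kn n : (n <= (c n).2)%N.
  by elim: n => [//|n IH]; have [+ _ _] := nextP (n, c n); apply: leq_ltn_trans.
have cS n : cyl (c n.+1).1 (c n.+1).2 `<=` cyl (c n).1 (c n).2.
  by case: (nextP (n, c n)).
have [z cz] := @cyl_nested_cap (fun n => (c n).1) (fun n => (c n).2) cS kn.
have [n _ Fz] := x0F z (cz 0%N).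
have [_ _ /disjoints_subset cF] := nextP (n, c n).
exact: (cF z (cz n.+1)).
Qed.

Definition baire_property (A : set cantor_space) : Prop :=
  exists U, open U /\ meager ((A `\` U) `|` (U `\` A)).

Lemma open_baire_property A : open A -> baire_property A.
Proof. by move=> oA; exists A; split => //; rewrite !setDv setU0; exact: meager0. Qed.

Lemma baire_propertyC A : baire_property A -> baire_property (~` A).
Proof.
move=> [U [oU mAU]].
(* V is the interior of ~` U, and ~` U `\` V is the boundary of U. *)
pose V := [set x | exists k, cyl x k `&` U = set0].
have oV : open V.
  apply/open_cylP => x [k xU]; exists k => y xy; exists k.
  by apply/disjoints_subset => z /(cyl_sub xy); move/disjoints_subset: xU; apply.
have boundary_nd : nowhere_dense (~` U `\` V).
  move=> x k; have [[y [xy Uy]]|noU] := pselect (exists y, cyl x k y /\ U y).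
    have [j yU] := (open_cylP U).1 oU y Uy; exists y, (maxn j k); split.
      by apply: subset_trans (cyl_sub xy); apply: cyl_le; rewrite leq_maxr.
    by apply/disjoints_subset => z /(cyl_le y _ _ (leq_maxl j k)) /yU Uz [].
  exists x, k; split => //; apply/disjoints_subset => z xz [_]; apply; exists k.
  by apply/disjoints_subset => w /(cyl_sub xz) xw Uw; apply: noU; exists w.
exists V; split => //; apply: (@sub_meager _ ((A `\` U) `|` (U `\` A) `|` (~` U `\` V))).
  move=> x [[nAx nVx]|[[k xU] /contrapT Ax]].
    by have [Ux|] := pselect (U x); [left; right|right].
  by left; left; split => //; move/disjoints_subset: xU; apply; apply: cyl_refl.
exact/meagerU/nowhere_dense_meager.
Qed.

Lemma baire_property_bigcup (A : nat -> set cantor_space) :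
  (forall n, baire_property (A n)) -> baire_property (\bigcup_n A n).
Proof.
move=> /choice [U AU]; exists (\bigcup_n U n); split.
  by apply: bigcup_open => n _; case: (AU n).
apply: (@sub_meager _ (\bigcup_n ((A n `\` U n) `|` (U n `\` A n)))).
  move=> x [[[n _ Ax] nUx]|[[n _ Ux] nAx]]; exists n => //.
    by left; split => // Ux; apply: nUx; exists n.
  by right; split => // Ax; apply: nAx; exists n.
by apply: meager_bigcup => n; case: (AU n).
Qed.

Lemma borel_baire_property A : borel_cantor A -> baire_property A.
Proof.
apply: smallest_sub; last exact: open_baire_property.
split; [exact/open_baire_property/open0| |exact: baire_property_bigcup].
by move=> B /baire_propertyC; rewrite setTD.
Qed.

Section XorSet.

Context {X : set cantor_space} (xorX : xor_set X).

Lemma xor_flip x n : X (flip x n) <-> ~ X x.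
Proof.
by have := xorX n (flip x n); rewrite flipK.
Qed.

Lemma xor_thin : thin X.
Proof.
move=> n x y Xx Xy /eq_off_flip [//|yx].
by move: Xy; rewrite yx => /xor_flip.
Qed.

Lemma xor_maximal Y : thin Y -> X `<=` Y -> Y = X.
Proof.
move=> thinY XY; apply/seteqP; split => // y Yy.
apply: contrapT => nXy; have Xy' : X (flip y 0) by apply/xor_flip.
have yy' : flip y 0 = y by apply: (thinY 0%N) => //; [exact: XY | exact: flip_eq_off].
by apply: nXy; rewrite -yy'.
Qed.

Lemma xor_setC : xor_set (~` X).
Proof. by move=> n x; have := xor_flip x n; rewrite /setC /=; tauto. Qed.

Lemma xor_cylI_not_meager x k : ~ meager (cyl x k `&` X).
Proof.
move=> mxX; apply: (@cyl_not_meager x k).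
apply: (@sub_meager _ ((cyl x k `&` X) `|` (flip^~ k @^-1` (cyl x k `&` X)))).
  move=> y xy; have [Xy|nXy] := pselect (X y); first by left.
  by right; split; [exact: cyl_flip_last | exact/xor_flip].
exact/meagerU/meager_flip.
Qed.

End XorSet.

Lemma xor_not_baire_property X : xor_set X -> ~ baire_property X.
Proof.
move=> xorX [U [oU mXU]].
have [[x Ux]|noU] := pselect (exists x, U x).
  have [k xU] := (open_cylP U).1 oU x Ux.
  case: (xor_cylI_not_meager (xor_setC xorX) x k).
  by apply: sub_meager mXU => y [xy nXy]; right; split => //; apply: xU.
case: (xor_cylI_not_meager xorX point 0).
by apply: sub_meager mXU => y [_ Xy]; left; split => // Uy; apply: noU; exists y.
Qed.

Theorem proposition13 (X : set cantor_space) :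
  xor_set X -> maximal_thin X /\ ~ borel_cantor X.
Proof.
move=> xorX; split; first by split; [exact: xor_thin | exact: xor_maximal].
by move=> /borel_baire_property; apply: xor_not_baire_property.
Qed.
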